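(* Fix $n$. The set $\mathcal{Q}=\mathcal{Q}(n)$ is closed under sums and products but is not closed under limits. The set $\mathcal{Q}'=\mathcal{Q}'(n)$ is closed under products but is not closed under limits.
   Context: Hermitian symmetric polynomials in $n$ variables: $r(z,\overline w)=\sum c_{\alpha\beta}z^\alpha\overline w^\beta$ with $c_{\alpha\beta}=\overline{c_{\beta\alpha}}$. $\mathcal{Q}(n)$: those $r$ with $r=\|F\|^2/\|G\|^2$ for holomorphic polynomial mappings $F,G$, $G\not\equiv0$. $\mathcal{Q}'(n)$: those $r$ with $r(z,\overline z)\ge0$ for all $z$ for which there exist a Hermitian symmetric $s\ge0$, not identically $0$, and a holomorphic polynomial mapping $F$ with $rs=\|F\|^2$. A set $\mathcal{S}$ of Hermitian symmetric polynomials is closed under limits if whenever $r_\lambda$, $\lambda$ in a closed set $K\subset\mathbb{R}^k$, is a family of Hermitian symmetric polynomials whose coefficient matrices depend continuously on $\lambda$, with $r_\lambda\in\mathcal{S}$, and $\lambda\to L\in K$, then $r_L\in\mathcal{S}$; ''not closed under limits'' means some such family has $r_\lambda\in\mathcal{S}$ for all $\lambda\ne L$ near $L$ (approaching $L$) but $r_L\notin\mathcal{S}$. *)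

From HB Require Import structures.
From mathcomp Require Import all_boot all_order all_algebra.
From mathcomp Require Import reals.
From mathcomp Require Import mpoly.
From mathcomp Require Import complex.

Set Implicit Arguments.
Unset Strict Implicit.
Unset Printing Implicit Defensive.

Import Order.TTheory GRing.Theory Num.Theory.
Local Open Scope ring_scope.

Section HermitianPolys.
Variables (R : realType) (n : nat).
Local Notation C := (complex R).

(* A polynomial r(z, wbar) in 2n variables: variables 0..n-1 are z_1..z_n,
   variables n..2n-1 are wbar_1..wbar_n.  Coefficient of the monomial (a,b)
   is c_{ab}. *)

Definition swap_idx (i : 'I_(n + n)) : 'I_(n + n) :=
  match split i with
  | inl j => rshift n j
  | inr j => lshift n j
  end.

Definition swap_mnm (m : 'X_{1..n + n}) : 'X_{1..n + n} :=
  [multinom m (swap_idx i) | i < n + n].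

Definition hermitian (r : {mpoly C[n + n]}) : Prop :=
  forall m : 'X_{1..n + n}, r@_m = conjc (r@_(swap_mnm m)).

Definition diag_pt (z : 'I_n -> C) : 'I_(n + n) -> C :=
  fun i => match split i with
           | inl j => z j
           | inr j => conjc (z j)
           end.

Definition evalH (r : {mpoly C[n + n]}) (z : 'I_n -> C) : C :=
  r.@[diag_pt z].

Definition normsq (F : seq {mpoly C[n]}) (z : 'I_n -> C) : C :=
  \sum_(f <- F) `|f.@[z]| ^+ 2.

(* Q(n): r = ||F||^2 / ||G||^2, G not identically 0, i.e. r ||G||^2 = ||F||^2 *)
Definition inQ (r : {mpoly C[n + n]}) : Prop :=
  hermitian r /\
  exists F G : seq {mpoly C[n]},
    has (fun g => g != 0) G /\
    forall z : 'I_n -> C, evalH r z * normsq G z = normsq F z.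

Definition inQ' (r : {mpoly C[n + n]}) : Prop :=
  hermitian r /\
  (forall z : 'I_n -> C, 0 <= evalH r z) /\
  exists s : {mpoly C[n + n]},
    [/\ hermitian s, s != 0, (forall z : 'I_n -> C, 0 <= evalH s z) &
    exists F : seq {mpoly C[n]},
      forall z : 'I_n -> C, evalH r z * evalH s z = normsq F z].

End HermitianPolys.

Section Limits.
Variables (R : realType) (k : nat).

Definition rv_near (x y : 'rV[R]_k) (d : R) : Prop :=
  forall i : 'I_k, `|x ord0 i - y ord0 i| < d.

Definition closed_set (K : 'rV[R]_k -> Prop) : Prop :=
  forall x, (forall d : R, 0 < d -> exists y, K y /\ rv_near x y d) -> K x.

Definition limit_point (K : 'rV[R]_k -> Prop) (L : 'rV[R]_k) : Prop :=
  forall d : R, 0 < d -> exists y, [/\ K y, y != L & rv_near y L d].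

Definition continuous_on (K : 'rV[R]_k -> Prop) (f : 'rV[R]_k -> complex R)
  : Prop :=
  forall x, K x -> forall e : R, 0 < e -> exists2 d : R, 0 < d &
    forall y, K y -> rv_near y x d -> Normc.normc (f y - f x) < e.
End Limits.

(* a family r_lambda, lambda in K, of Hermitian symmetric polynomials whose
   coefficient matrices (of a fixed finite size: degrees bounded by D) depend
   continuously on lambda *)
Definition continuous_family (R : realType) (n k : nat)
  (K : 'rV[R]_k -> Prop) (r : 'rV[R]_k -> {mpoly (complex R)[n + n]}) : Prop :=
  [/\ forall l, K l -> hermitian (r l),
      (exists D : nat, forall l, K l -> (msize (r l) <= D)%N) &
      forall m : 'X_{1..n + n}, continuous_on K (fun l => (r l)@_m)].

Definition not_closed_under_limits (R : realType) (n : nat)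
  (S : {mpoly (complex R)[n + n]} -> Prop) : Prop :=
  exists (k : nat) (K : 'rV[R]_k -> Prop) (L : 'rV[R]_k)
         (r : 'rV[R]_k -> {mpoly (complex R)[n + n]}),
    [/\ closed_set K /\ K L, limit_point K L, continuous_family K r,
        (exists2 d : R, 0 < d &
           forall l, K l -> l != L -> rv_near l L d -> S (r l)) &
        ~ S (r L)].

(* Sums and products: clearing denominators, [|F|^2/|G|^2 + |F'|^2/|G'|^2]
   has numerator [|F G' ++ F' G|^2] and denominator [|G G'|^2], where [F G]
   lists all products [f g].

   Non-closedness: take [r_lam = (|z_1|^2 - 1)^2 + lam |z_1|^2].  For
   [lam > 0], multiplying by a polynomial in [|z_1|^2] with positive
   coefficients (a Polya-type multiplier) gives a polynomial in [|z_1|^2] with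
   nonnegative coefficients, i.e. a squared norm of monomials, so [r_lam] is in
   Q and in Q'.  The limit [r_0] vanishes on [|z_1| = 1]; any [F] with
   [r_0 s = |F|^2] then vanishes on this set, which is Zariski dense, so
   [F = 0].  For Q this forces [G = 0]; for Q' it forces [s] to vanish off
   [|z_1| = 1], hence [s = 0]. *)

From HB Require Import structures.
From mathcomp Require Import all_boot all_order all_algebra.
From mathcomp Require Import fingroup perm.
From mathcomp Require Import reals mpoly complex.
From mathcomp Require Import ring lra zify.

Set Implicit Arguments.
Unset Strict Implicit.
Unset Printing Implicit Defensive.

Import Order.TTheory GRing.Theory Num.Theory.
Local Open Scope ring_scope.

Section GridZero.
Variable F : idomainType.

Lemma eq_rmorph_mpoly m (S : comNzRingType) (f g : {rmorphism {mpoly F[m]} -> S}) :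
  (forall c, f c%:MP = g c%:MP) -> (forall i, f 'X_i = g 'X_i) -> f =1 g.
Proof.
move=> fC fX p; rewrite (mpolyE p) !rmorph_sum; apply: eq_bigr => M _.
rewrite -mul_mpolyC !rmorphM fC mpolyXE_id !rmorph_prod; congr (_ * _).
by apply: eq_bigr => i _; rewrite !rmorphXn fX.
Qed.

Lemma muniX_widen m (j : 'I_m) :
  muni ('X_(widen_ord (leqnSn m) j) : {mpoly F[m.+1]}) = ('X_j)%:P.
Proof.
rewrite /muni mmapX mmap1U; case: splitP => [k /= jk|k /=].
  by congr ('X__)%:P; apply/val_inj.
by rewrite ord1 addn0 => /eqP; rewrite ltn_eqF.
Qed.

Lemma muniX_max m : muni ('X_ord_max : {mpoly F[m.+1]}) = 'X.
Proof.
rewrite /muni mmapX mmap1U; case: splitP => [k /= kE|//].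
by move: (ltn_ord k); rewrite -kE ltnn.
Qed.

Lemma lift_max m (j : 'I_m) : lift ord_max j = widen_ord (leqnSn m) j.
Proof. by apply/val_inj; rewrite /= /bump leqNgt ltn_ord. Qed.

Lemma muniK m (p : {mpoly F[m.+1]}) :
  (map_poly (@mwiden m F) (muni p)).['X_ord_max] = p.
Proof.
pose back := horner_eval ('X_ord_max : {mpoly F[m.+1]})
  \o map_poly (@mwiden m F) \o @muni m F.
apply: (@eq_rmorph_mpoly _ _ back idfun) => [c|i]; rewrite /back /= horner_evalE.
  by rewrite muniC map_polyC hornerC /= mwidenC.
case: (unliftP ord_max i) => [j ->|->].
  by rewrite lift_max muniX_widen map_polyC hornerC /= mwidenX mnmwiden1.
by rewrite muniX_max map_polyX hornerX.
Qed.

Lemma muni_inj m : injective (@muni m F).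
Proof. by move=> p q pq; rewrite -(muniK p) pq muniK. Qed.

Lemma meval_muni m (w : 'I_m.+1 -> F) (p : {mpoly F[m.+1]}) :
  p.@[w] = (map_poly (meval (w \o widen_ord (leqnSn m))) (muni p)).[w ord_max].
Proof.
pose g := horner_eval (w ord_max)
  \o map_poly (meval (w \o widen_ord (leqnSn m))) \o @muni m F.
apply: (@eq_rmorph_mpoly _ _ (meval w) g) => [c|i]; rewrite /g /= horner_evalE.
  by rewrite mevalC muniC map_polyC hornerC /= mevalC.
case: (unliftP ord_max i) => [j ->|->]; rewrite mevalXU.
  by rewrite lift_max muniX_widen map_polyC hornerC /= mevalXU.
by rewrite muniX_max map_polyX hornerX.
Qed.

Lemma poly_eq0_on_seq (s : nat -> F) (q : {poly F}) :
  injective s -> (forall k, q.[s k] = 0) -> q = 0.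
Proof.
move=> s_inj qs0; apply/eqP/negPn/negP => q_neq0.
have roots : all (root q) (mkseq s (size q)).
  by apply/allP => _ /mapP [k _ ->]; apply/rootP.
have := max_poly_roots q_neq0 roots.
by rewrite map_inj_uniq ?iota_uniq // size_mkseq ltnn => /(_ isT).
Qed.

Lemma mpoly_eq0_on_grid (s : nat -> F) m (p : {mpoly F[m]}) :
  injective s -> (forall v : 'I_m -> nat, p.@[s \o v] = 0) -> p = 0.
Proof.
move=> s_inj; elim: m p => [|m IH] p p0.
  rewrite -(mpolyKC p); have := p0 (fun _ => 0%N).
  by rewrite -{1}(mpolyKC p) mevalC => ->.
apply: muni_inj; rewrite rmorph0; apply/polyP => k; rewrite coef0.
apply: IH => v; rewrite -coef_map; set q := map_poly _ _.
suff -> : q = 0 by rewrite coef0.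
apply: (poly_eq0_on_seq s_inj) => x.
pose w (i : 'I_m.+1) := if unlift ord_max i is Some j then v j else x.
have := p0 w; rewrite meval_muni /= /w unlift_none => <-; congr _.[_].
apply: eq_map_poly => r; apply: meval_eq => j /=.
by rewrite -lift_max liftK.
Qed.

End GridZero.

Section Hermitian.
Variables (R : realType) (n : nat).
Local Notation C := (complex R).
Implicit Types (p q : {mpoly C[n + n]}) (z : 'I_n -> C).

Lemma split_lshift (i : 'I_n) : split (lshift n i) = inl i.
Proof. exact: (unsplitK (inl _ i)). Qed.

Lemma split_rshift (i : 'I_n) : split (rshift n i) = inr i.
Proof. exact: (unsplitK (inr _ i)). Qed.

Lemma swap_idxK : involutive (@swap_idx n).
Proof.
move=> i; rewrite /swap_idx; case iE: (split i) => [j|j].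
  by rewrite split_rshift -[RHS](splitK i) iE.
by rewrite split_lshift -[RHS](splitK i) iE.
Qed.

Definition swap_perm : 'S_(n + n) := perm (inv_inj swap_idxK).

Definition hconj (p : {mpoly C[n + n]}) : {mpoly C[n + n]} :=
  msym swap_perm (map_mpoly conjc p).

Fact hconj_is_zmod_morphism : zmod_morphism hconj.
Proof. by move=> p q; rewrite /hconj rmorphB msymB. Qed.

HB.instance Definition _ :=
  Algebra.isZmodMorphism.Build {mpoly C[n + n]} {mpoly C[n + n]} hconj
    hconj_is_zmod_morphism.

Fact hconj_is_monoid_morphism : monoid_morphism hconj.
Proof.
split=> [|p q]; first by rewrite /hconj rmorph1 msym1.
by rewrite /hconj rmorphM msymM.
Qed.

HB.instance Definition _ :=
  GRing.isMonoidMorphism.Build {mpoly C[n + n]} {mpoly C[n + n]} hconj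
    hconj_is_monoid_morphism.

Lemma mcoeff_hconj p m : (hconj p)@_m = conjc p@_(swap_mnm m).
Proof.
rewrite /hconj mcoeff_sym mcoeff_map_mpoly; congr (conjc p@_ _).
by apply/mnmP => i; rewrite !mnmE permE.
Qed.

Lemma hermitianE p : hermitian p <-> hconj p = p.
Proof.
split=> [herm_p|hp m]; last by rewrite -mcoeff_hconj hp.
by apply/mpolyP => m; rewrite mcoeff_hconj -herm_p.
Qed.

Lemma hermitianD p q : hermitian p -> hermitian q -> hermitian (p + q).
Proof.
by move=> /hermitianE hp /hermitianE hq; apply/hermitianE; rewrite rmorphD /= hp hq.
Qed.

Lemma hermitianM p q : hermitian p -> hermitian q -> hermitian (p * q).
Proof.
by move=> /hermitianE hp /hermitianE hq; apply/hermitianE; rewrite rmorphM /= hp hq.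
Qed.

Lemma hconjX i : hconj 'X_i = 'X_(swap_idx i).
Proof.
rewrite /hconj map_mpolyX msymX; congr 'X_[_].
apply/mnmP => j; rewrite !mnmE.
have swapE k : swap_perm k = swap_idx k by rewrite permE.
by rewrite -swapE (canF_eq (permK swap_perm)).
Qed.

Lemma hconjC c : hconj c%:MP = (conjc c)%:MP.
Proof. by rewrite /hconj map_mpolyC -alg_mpolyC msymZ msym1 alg_mpolyC. Qed.

Lemma hermitianZ_real p (a : R) : hermitian p -> hermitian ((a%:C)%C *: p).
Proof.
move=> /hermitianE hp; apply/hermitianE.
by rewrite -mul_mpolyC rmorphM /= hp hconjC conjc_real.
Qed.

Lemma evalH_lshift i z : evalH 'X_(lshift n i) z = z i.
Proof. by rewrite /evalH mevalXU /diag_pt split_lshift. Qed.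

Lemma evalH_rshift i z : evalH 'X_(rshift n i) z = conjc (z i).
Proof. by rewrite /evalH mevalXU /diag_pt split_rshift. Qed.

End Hermitian.

Section SquaredNorms.
Variables (R : realType) (n : nat).
Local Notation C := (complex R).
Implicit Types (F G : seq {mpoly C[n]}) (z : 'I_n -> C).

Lemma normsq_cat F G z :
  normsq (F ++ G) z = normsq F z + normsq G z.
Proof. by rewrite /normsq big_cat. Qed.

Lemma normsq_ge0 F z : 0 <= normsq F z.
Proof. by apply: sumr_ge0 => f _; rewrite exprn_ge0. Qed.

Lemma normsq_eq0 F z : normsq F z = 0 -> forall f, f \in F -> f.@[z] = 0.
Proof.
move/eqP; rewrite /normsq psumr_eq0 => [/allP normF0 f fF|f _]; last first.
  exact: exprn_ge0.
by move/implyP: (normF0 f fF) => /(_ isT); rewrite expf_eq0 normr_eq0 => /eqP.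
Qed.

Definition seq_mul (F G : seq {mpoly C[n]}) := [seq f * g | f <- F, g <- G].

Lemma normsq_seq_mul F G z : normsq (seq_mul F G) z = normsq F z * normsq G z.
Proof.
rewrite /normsq big_allpairs_dep mulr_suml; apply: eq_bigr => f _.
by rewrite mulr_sumr; apply: eq_bigr => g _; rewrite mevalM normrM exprMn.
Qed.

Lemma has_nonzero_seq_mul F G :
  has (fun g => g != 0) F -> has (fun g => g != 0) G ->
  has (fun g => g != 0) (seq_mul F G).
Proof.
move=> /hasP [f fF f_neq0] /hasP [g gG g_neq0]; apply/hasP; exists (f * g).
  by apply/allpairsP; exists (f, g).
exact: mulf_neq0.
Qed.

Lemma inQD (r1 r2 : {mpoly C[n + n]}) : inQ r1 -> inQ r2 -> inQ (r1 + r2).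
Proof.
move=> [h1 [F1 [G1 [G1_neq0 e1]]]] [h2 [F2 [G2 [G2_neq0 e2]]]].
split; first exact: hermitianD.
exists (seq_mul F1 G2 ++ seq_mul F2 G1), (seq_mul G1 G2).
split=> [|z]; first exact: has_nonzero_seq_mul.
by rewrite /evalH mevalD normsq_cat !normsq_seq_mul -e1 -e2; ring.
Qed.

Lemma inQM (r1 r2 : {mpoly C[n + n]}) : inQ r1 -> inQ r2 -> inQ (r1 * r2).
Proof.
move=> [h1 [F1 [G1 [G1_neq0 e1]]]] [h2 [F2 [G2 [G2_neq0 e2]]]].
split; first exact: hermitianM.
exists (seq_mul F1 F2), (seq_mul G1 G2).
split=> [|z]; first exact: has_nonzero_seq_mul.
by rewrite /evalH mevalM !normsq_seq_mul -e1 -e2; ring.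
Qed.

Lemma inQ'M (r1 r2 : {mpoly C[n + n]}) : inQ' r1 -> inQ' r2 -> inQ' (r1 * r2).
Proof.
move=> [h1 [r1_ge0 [s1 [hs1 s1_neq0 s1_ge0 [F1 e1]]]]].
move=> [h2 [r2_ge0 [s2 [hs2 s2_neq0 s2_ge0 [F2 e2]]]]].
have evalHM p q z : evalH (p * q) z = evalH p z * evalH q z by exact: mevalM.
split; first exact: hermitianM.
split=> [z|]; first by rewrite evalHM mulr_ge0.
exists (s1 * s2); split; [exact: hermitianM | exact: mulf_neq0 | |].
  by move=> z; rewrite evalHM mulr_ge0.
by exists (seq_mul F1 F2) => z; rewrite !evalHM normsq_seq_mul -e1 -e2; ring.
Qed.

End SquaredNorms.

Section PolyaMultiplier.
Variables (K : realFieldType) (N : nat) (lam : K).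

Definition pmult_coef (j : nat) : K := j.+1%:R * (N.+1%:R - j%:R).

Definition prod_coef (k : nat) : K :=
  if (k == 0) || (k == N.+2) then N.+1%:R else lam * pmult_coef k.-1 - 2.

Definition pmult : {poly K} := \poly_(j < N.+2) pmult_coef j.

Definition hquad : {poly K} := 'X^2 + (lam - 2) *: 'X + 1.

(* [(1 - X)^2] annihilates the quadratic [pmult_coef] up to its constant second
   difference [-2], so the middle coefficients of the product are
   [lam * pmult_coef (k - 1) - 2]. *)
Lemma hquad_pmult : hquad * pmult = \poly_(k < N.+3) prod_coef k.
Proof.
apply/polyP => k.
rewrite /hquad !mulrDl -scalerAl mul1r !coefD coefZ coefXnM coefXM.
rewrite /pmult !coef_poly /prod_coef /pmult_coef.
case: k => [|[|k]] /=; try ring.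
rewrite !ltnS !eqSS !subSS subn0.
case: (ltngtP k N) => [kN|Nk|->]; last by rewrite leqnSn; ring.
  by rewrite (leqW (ltnW kN)); ring.
case: (ltngtP k N.+1) => [kN|_|->]; last by ring.
  by move: Nk; rewrite ltnNge -ltnS kN.
by ring.
Qed.

Lemma polya_identity u :
  ((u - 1) ^+ 2 + lam * u) * \sum_(j < N.+2) pmult_coef j * u ^+ j
  = \sum_(k < N.+3) prod_coef k * u ^+ k.
Proof.
have horner_poly m (c : nat -> K) :
    (\poly_(j < m) c j).[u] = \sum_(j < m) c j * u ^+ j.
  rewrite (horner_coef_wide _ (size_poly _ _)).
  by apply: eq_bigr => j _; rewrite coef_poly ltn_ord.
have := congr1 (horner^~ u) hquad_pmult.
rewrite /= hornerM !horner_poly => <-; congr (_ * _).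
by rewrite /hquad !hornerD hornerZ hornerXn hornerX hornerC; ring.
Qed.

Lemma pmult_coef_ge j : (j <= N)%N -> N.+1%:R <= pmult_coef j.
Proof.
move=> jN; have -> : pmult_coef j = N.+1%:R + j%:R * (N - j)%:R.
  by rewrite /pmult_coef natrB // -!natr1; ring.
by rewrite lerDl mulr_ge0 ?ler0n.
Qed.

Lemma pmult_coef_ge0 j : (j <= N.+1)%N -> 0 <= pmult_coef j.
Proof.
rewrite leq_eqVlt => /orP [/eqP ->|jN]; first by rewrite /pmult_coef subrr mulr0.
by apply: le_trans (pmult_coef_ge _); rewrite ?ler0n // -ltnS.
Qed.

Lemma prod_coef_ge0 k : (k <= N.+2)%N -> 0 <= lam -> 2 <= lam * N.+1%:R ->
  0 <= prod_coef k.
Proof.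
move=> kN lam_ge0 lamN; rewrite /prod_coef.
case: ifP => [_|/norP [k_neq0 k_neqN]]; first by rewrite ler0n.
have : lam * N.+1%:R <= lam * pmult_coef k.-1.
  by rewrite ler_wpM2l // pmult_coef_ge //; lia.
by rewrite subr_ge0 => /(le_trans lamN).
Qed.
End PolyaMultiplier.

Section Example.
Variables (R : realType) (n : nat) (i0 : 'I_n).
Local Notation C := (complex R).
Local Open Scope complex_scope.
Implicit Types (z : 'I_n -> C).

Definition abs2 z : R := complex.Re (z i0) ^+ 2 + complex.Im (z i0) ^+ 2.

Lemma abs2_ge0 z : 0 <= abs2 z.
Proof. by rewrite /abs2 addr_ge0 ?sqr_ge0. Qed.

Lemma abs2_normc z : (abs2 z)%:C = `|z i0| ^+ 2.
Proof. exact: add_Re2_Im2. Qed.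

Lemma abs2E z : (abs2 z)%:C = z i0 * conjc (z i0).
Proof. by rewrite abs2_normc sqr_normc. Qed.

Definition abs2X : {mpoly C[n + n]} := 'X_(lshift n i0) * 'X_(rshift n i0).

Lemma evalH_abs2X z : evalH abs2X z = (abs2 z)%:C.
Proof. by rewrite abs2E /evalH mevalM -!/(evalH _ z) evalH_lshift evalH_rshift. Qed.

Lemma hermitian_abs2X : hermitian abs2X.
Proof.
apply/hermitianE; rewrite rmorphM /= !hconjX /swap_idx.
by rewrite split_lshift split_rshift mulrC.
Qed.

Definition sphere_sq : {mpoly C[n + n]} := (abs2X - 1) ^+ 2.

Lemma hermitian_sphere_sq : hermitian sphere_sq.
Proof.
have /hermitianE h := hermitian_abs2X.
by apply/hermitianE; rewrite rmorphXn rmorphB rmorph1 /= h.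
Qed.

Definition rfam (lam : R) : {mpoly C[n + n]} := sphere_sq + lam%:C *: abs2X.

Lemma rfam0 : rfam 0 = sphere_sq.
Proof. by rewrite /rfam scale0r addr0. Qed.

Lemma hermitian_rfam lam : hermitian (rfam lam).
Proof.
apply: hermitianD; first exact: hermitian_sphere_sq.
exact/hermitianZ_real/hermitian_abs2X.
Qed.

Lemma evalH_rfam lam z :
  evalH (rfam lam) z = ((abs2 z - 1) ^+ 2 + lam * abs2 z)%:C.
Proof.
rewrite /evalH mevalD rmorphXn /= mevalB meval1 mevalZ -!/(evalH _ z).
rewrite evalH_abs2X.
by set u := abs2 z; rewrite !(rmorphB, rmorphD, rmorphM, rmorph1, rmorphXn).
Qed.

Definition smult (N : nat) : {mpoly C[n + n]} :=
  \sum_(j < N.+2) (pmult_coef R N j)%:C *: abs2X ^+ j.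

Lemma hermitian_smult N : hermitian (smult N).
Proof.
have /hermitianE h := hermitian_abs2X.
apply/hermitianE; rewrite rmorph_sum; apply: eq_bigr => j _.
by rewrite -mul_mpolyC rmorphM rmorphXn /= h hconjC conjc_real.
Qed.

Lemma evalH_smult N z :
  evalH (smult N) z = (\sum_(j < N.+2) pmult_coef R N j * abs2 z ^+ j)%:C.
Proof.
rewrite /evalH rmorph_sum [RHS]rmorph_sum; apply: eq_bigr => j _ /=.
rewrite mevalZ rmorphXn /= -/(evalH _ z) evalH_abs2X.
by rewrite [RHS]rmorphM rmorphXn.
Qed.

Lemma smult_neq0 N : smult N != 0.
Proof.
apply/eqP => s0; have := evalH_smult N (fun _ => 0).
rewrite s0 /evalH meval0 big_ord_recl big1 => [|j _]; last first.
  by rewrite /abs2 /= expr0n /= addr0 expr0n mulr0.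
rewrite expr0 mulr1 addr0 => /esym/eqP; apply/negP.
by rewrite fmorph_eq0 /pmult_coef subr0 mul1r pnatr_eq0.
Qed.

Definition mono_seq (c : nat -> R) (M : nat) : seq {mpoly C[n]} :=
  [seq (Num.sqrt (c j))%:C *: 'X_i0 ^+ j | j <- iota 0 M].

Lemma normsq_mono_seq (c : nat -> R) M z : (forall j, (j < M)%N -> 0 <= c j) ->
  normsq (mono_seq c M) z = (\sum_(j < M) c j * abs2 z ^+ j)%:C.
Proof.
move=> c_ge0; rewrite /normsq big_map -(subn0 M) -/(index_iota 0 M) big_mkord.
rewrite subn0 rmorph_sum; apply: eq_bigr => j _.
rewrite mevalZ rmorphXn /= mevalXU normrM exprMn normrX -exprM mulnC exprM.
rewrite sqr_normc conjc_real -rmorphM -expr2 sqr_sqrtr ?c_ge0 //.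
by rewrite -abs2_normc [RHS]rmorphM rmorphXn.
Qed.

Lemma mono_seq_neq0 (c : nat -> R) M : (0 < M)%N -> 0 < c 0%N ->
  has (fun f => f != 0) (mono_seq c M).
Proof.
case: M => // M _ c0; apply/hasP; exists ((Num.sqrt (c 0%N))%:C *: 'X_i0 ^+ 0).
  by rewrite /mono_seq /= inE eqxx.
rewrite expr0 scaler_eq0 oner_eq0 orbF eq_complex /= eqxx andbT.
by rewrite sqrtr_eq0 -ltNge.
Qed.

Lemma evalH_smult_normsq N z :
  evalH (smult N) z = normsq (mono_seq (pmult_coef R N) N.+2) z.
Proof.
rewrite evalH_smult normsq_mono_seq // => j jN.
by apply: pmult_coef_ge0; rewrite -ltnS.
Qed.

Section FixedDegree.
Variables (lam : R) (N : nat).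
Hypotheses (lam_ge0 : 0 <= lam) (lamN : 2 <= lam * N.+1%:R).

Lemma rfam_mul_normsq z :
  evalH (rfam lam) z * normsq (mono_seq (pmult_coef R N) N.+2) z
  = normsq (mono_seq (prod_coef N lam) N.+3) z.
Proof.
have pmult_ge0 j : (j < N.+2)%N -> 0 <= pmult_coef R N j.
  by move=> jN; apply: pmult_coef_ge0; rewrite -ltnS.
have prod_ge0 k : (k < N.+3)%N -> 0 <= prod_coef N lam k.
  by move=> kN; apply: prod_coef_ge0.
by rewrite !normsq_mono_seq // evalH_rfam -rmorphM polya_identity.
Qed.

Lemma inQ_rfam_deg : inQ (rfam lam).
Proof.
split; first exact: hermitian_rfam.
exists (mono_seq (prod_coef N lam) N.+3), (mono_seq (pmult_coef R N) N.+2).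
split; last exact: rfam_mul_normsq.
apply: mono_seq_neq0 => //.
by apply: lt_le_trans (pmult_coef_ge _ _); rewrite ?ltr0n.
Qed.

Lemma inQ'_rfam_deg : inQ' (rfam lam).
Proof.
split; first exact: hermitian_rfam.
split=> [z|].
  by rewrite evalH_rfam ler0c addr_ge0 ?sqr_ge0 ?mulr_ge0 ?abs2_ge0.
exists (smult N); split; [exact: hermitian_smult | exact: smult_neq0 | |].
  by move=> z; rewrite evalH_smult_normsq normsq_ge0.
exists (mono_seq (prod_coef N lam) N.+3) => z.
by rewrite evalH_smult_normsq rfam_mul_normsq.
Qed.

End FixedDegree.

Lemma exists_pmult_degree (lam : R) : 0 < lam -> exists N, 2 <= lam * N.+1%:R.
Proof.
move=> lam_gt0; exists (Num.bound (2 / lam)).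
have := archi_boundP (ltW (divr_gt0 (ltr0n R 2) lam_gt0)).
rewrite ltr_pdivrMr // mulrC => /ltW /le_trans; apply.
by rewrite ler_wpM2l ?ltW // ltr_nat.
Qed.

Lemma inQ_inQ'_rfam lam : 0 < lam -> inQ (rfam lam) /\ inQ' (rfam lam).
Proof.
move=> lam_gt0; have [N lamN] := exists_pmult_degree lam_gt0.
by split; [apply: inQ_rfam_deg lamN | apply: inQ'_rfam_deg lamN]; exact: ltW.
Qed.

End Example.

Section RationalCircle.
Variable R : realType.
Local Open Scope complex_scope.

Definition circ (k : nat) : complex R :=
  Complex ((1 - k%:R ^+ 2) / (1 + k%:R ^+ 2)) (2 * k%:R / (1 + k%:R ^+ 2)).

Lemma circ_den_neq0 (k : nat) : 1 + k%:R ^+ 2 != 0 :> R.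
Proof. by rewrite lt0r_neq0 // ltr_pwDl ?sqr_ge0. Qed.

Lemma circ_on_circle k : circ k * conjc (circ k) = 1.
Proof.
have := circ_den_neq0 k; rewrite /circ /conjc => den_neq0.
by apply/eqP; rewrite eq_complex /=; apply/andP; split; apply/eqP; field.
Qed.

Lemma circ_inj : injective circ.
Proof.
move=> k l /eqP; rewrite eq_complex /= => /andP [/eqP ReE _].
have := circ_den_neq0 k; have := circ_den_neq0 l.
move=> den_l den_k; move/eqP: ReE; rewrite eqr_div // => /eqP ReE.
have : k%:R ^+ 2 = l%:R ^+ 2 :> R by nra.
by move/eqP; rewrite -!natrX eqr_nat eqn_exp2r // => /eqP.
Qed.

End RationalCircle.

Lemma natr2_inj (C : numDomainType) : injective (fun k : nat => k.+2%:R : C).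
Proof. by move=> k l /eqP; rewrite eqr_nat => /eqP []. Qed.

Section SphereZero.
Variables (R : realType) (n : nat) (i0 : 'I_n).
Local Notation C := (complex R).
Local Open Scope complex_scope.
Local Notation sphere_sq := (@sphere_sq R n i0).
Implicit Types (z : 'I_n -> C).

Lemma evalH_sphere_sq_eq0 z :
  (evalH sphere_sq z == 0) = (z i0 * conjc (z i0) == 1).
Proof.
rewrite -rfam0 evalH_rfam mul0r addr0 fmorph_eq0 sqrf_eq0 subr_eq0.
by rewrite -(inj_eq (@complexI R)) abs2E.
Qed.

Lemma normsq_eq0_of_sphere_sq (F : seq {mpoly C[n]}) (s : ('I_n -> C) -> C) :
  (forall z, evalH sphere_sq z * s z = normsq F z) -> forall z, normsq F z = 0.
Proof.
move=> rsF; have F0 f : f \in F -> f = 0.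
  move=> fF; apply: (mpoly_eq0_on_grid (@circ_inj R)) => v.
  apply: normsq_eq0 fF; rewrite -rsF.
  by apply/eqP; rewrite mulf_eq0 evalH_sphere_sq_eq0 /= circ_on_circle eqxx.
move=> z; rewrite /normsq big1_seq // => f /= /F0 ->.
by rewrite meval0 normr0 expr0n.
Qed.

Lemma sphere_sq_notin_Q : ~ inQ sphere_sq.
Proof.
move=> [_ [F [G [/hasP [g gG g_neq0] rGF]]]]; have F0 := normsq_eq0_of_sphere_sq rGF.
move/eqP: g_neq0; apply.
apply: (@mpoly_eq0_on_grid _ (fun k : nat => k.+2%:R)); first exact: natr2_inj.
move=> v; pose z := (fun k : nat => k.+2%:R : C) \o v.
have rz_neq0 : evalH sphere_sq z != 0.
  by rewrite evalH_sphere_sq_eq0 /z /= rmorph_nat -natrM pnatr_eq1.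
have : evalH sphere_sq z * normsq G z == 0 by rewrite rGF F0.
by rewrite mulf_eq0 (negbTE rz_neq0) => /eqP /normsq_eq0; apply.
Qed.

(* The substitution [z = x + i y, zbar = x - i y] makes the two blocks of
   variables independent: at real [x, y] it evaluates [s] at [(z, zbar)], and
   being invertible it loses no information. *)
Definition realify : (n + n).-tuple {mpoly C[n + n]} :=
  [tuple match split i with
         | inl j => 'X_(lshift n j) + 'i%:MP * 'X_(rshift n j)
         | inr j => 'X_(lshift n j) - 'i%:MP * 'X_(rshift n j)
         end | i < n + n].

Lemma meval_realify (w : 'I_(n + n) -> C) i : (tnth realify i).@[w] =
  match split i with
  | inl j => w (lshift n j) + 'i * w (rshift n j)
  | inr j => w (lshift n j) - 'i * w (rshift n j)
  end.
Proof.
rewrite tnth_mktuple; case: (split i) => j.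
  by rewrite mevalD mevalM mevalC !mevalXU.
by rewrite mevalB mevalM mevalC !mevalXU.
Qed.

Lemma mpoly_eq0_off_sphere (s : {mpoly C[n + n]}) :
  (forall z, z i0 * conjc (z i0) != 1 -> evalH s z = 0) -> s = 0.
Proof.
move=> s0; have sqri : 'i * 'i = -1 :> C by rewrite -expr2 sqrCi.
pose nat2 (k : nat) : C := k.+2%:R.
have comp0 : s \mPo realify = 0.
  apply: (@mpoly_eq0_on_grid _ nat2); first exact: natr2_inj.
  move=> v; rewrite comp_mpoly_meval.
  pose z j := nat2 (v (lshift n j)) + 'i * nat2 (v (rshift n j)).
  have conj_z j :
      conjc (z j) = nat2 (v (lshift n j)) - 'i * nat2 (v (rshift n j)).
    rewrite /z rmorphD rmorphM !rmorph_nat -mulNr; congr (_ + _ * _).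
    exact: conjCi.
  transitivity (evalH s z); rewrite /evalH.
    apply: meval_eq => i; rewrite meval_realify /diag_pt.
    by case: (split i) => j //=; rewrite conj_z.
  apply: s0; rewrite conj_z /z mulrC -subr_sqr exprMn sqrCi mulN1r opprK.
  by rewrite /nat2 -!natrX -natrD pnatr_eq1.
apply: (@mpoly_eq0_on_grid _ nat2); first exact: natr2_inj.
move=> w; set u := nat2 \o w.
pose x i := match split i with
  | inl j => (u (lshift n j) + u (rshift n j)) / 2
  | inr j => 'i * (u (rshift n j) - u (lshift n j)) / 2
  end.
have two_neq0 : 2 != 0 :> C by rewrite pnatr_eq0.
rewrite -[RHS](meval0 x) -comp0 comp_mpoly_meval; apply: meval_eq => i.
rewrite meval_realify /x; case iE: (split i) => [j|j].
  have -> : i = lshift n j by rewrite -(splitK i) iE.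
  by rewrite split_lshift split_rshift !mulrA sqri; field.
have -> : i = rshift n j by rewrite -(splitK i) iE.
by rewrite split_lshift split_rshift !mulrA sqri; field.
Qed.

Lemma sphere_sq_notin_Q' : ~ inQ' sphere_sq.
Proof.
move=> [_ [_ [s [_ s_neq0 _ [F rsF]]]]]; have F0 := normsq_eq0_of_sphere_sq rsF.
move/eqP: s_neq0; apply; apply: mpoly_eq0_off_sphere => z.
rewrite -evalH_sphere_sq_eq0 => rz_neq0; move: (rsF z).
by rewrite F0 => /eqP; rewrite mulf_eq0 (negbTE rz_neq0) => /eqP.
Qed.

End SphereZero.

Section AffineFamily.
Variables (R : realType) (n : nat).
Local Notation C := (complex R).
Local Open Scope complex_scope.
Variables (S : {mpoly C[n + n]} -> Prop) (p q : {mpoly C[n + n]}).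
Hypotheses (herm_p : hermitian p) (herm_q : hermitian q).

Lemma normc_real (a : R) : Normc.normc a%:C = `|a|.
Proof. by rewrite /Normc.normc /= expr0n /= addr0 sqrtr_sqr. Qed.

Let K (l : 'rV[R]_1) := 0 <= l ord0 ord0 <= 1.

Lemma closed_unit_interval : closed_set K.
Proof.
move=> x xK; apply/andP; split; rewrite leNgt; apply/negP => x_out.
  have [|y [/andP [y0 _] /(_ ord0)]] := xK (- x ord0 ord0).
    by rewrite oppr_gt0.
  by rewrite ltr_norml; lra.
have [|y [/andP [_ y1] /(_ ord0)]] := xK (x ord0 ord0 - 1).
  by rewrite subr_gt0.
by rewrite ltr_norml; lra.
Qed.

Lemma limit_point_unit_interval : limit_point K 0.
Proof.
move=> d d_gt0; pose e := Num.min (d / 2) 1.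
have e_gt0 : 0 < e by rewrite lt_min ltr01 andbT divr_gt0.
exists (\row_(i < 1) e); split.
- by rewrite /K mxE ltW //= ge_min lexx orbT.
- by apply/eqP => /matrixP /(_ ord0 ord0); rewrite !mxE => /eqP; rewrite gt_eqF.
- move=> i; rewrite ord1 !mxE subr0 gtr0_norm // gt_min; apply/orP; left.
  by rewrite ltr_pdivrMr // ltr_pMr // ltr1n.
Qed.

Lemma continuous_affine_family :
  continuous_family K (fun l => p + (l ord0 ord0)%:C *: q).
Proof.
split.
- by move=> l _; apply: hermitianD => //; apply: hermitianZ_real.
- exists (maxn (msize p) (msize q)) => l _.
  apply: leq_trans (msizeD_le _ _) _; rewrite geq_max leq_maxl /=.
  exact: leq_trans (msizeZ_le _ _) (leq_maxr _ _).
move=> m x _ e e_gt0; set c := Normc.normc q@_m.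
have c_ge0 : 0 <= c.
  by rewrite /c /Normc.normc; case: (q@_m) => a b; apply: sqrtr_ge0.
exists (e / (c + 1)); first by rewrite divr_gt0 // ltr_wpDl.
move=> y _ /(_ ord0) yx.
rewrite !mcoeffD !mcoeffZ opprD addrACA subrr add0r -mulrBl -rmorphB.
rewrite Normc.normcM normc_real -/c.
have : e / (c + 1) * (c + 1) = e by rewrite divfK // lt0r_neq0 // ltr_wpDl.
have := normr_ge0 (y ord0 ord0 - x ord0 ord0).
nra.
Qed.

Lemma not_closed_under_limits_affine :
  (forall lam : R, 0 < lam -> S (p + lam%:C *: q)) -> ~ S p ->
  not_closed_under_limits S.
Proof.
move=> S_pos notSp; exists 1%N, K, 0, (fun l => p + (l ord0 ord0)%:C *: q).
split.
- by split; [exact: closed_unit_interval | rewrite /K mxE lexx ler01].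
- exact: limit_point_unit_interval.
- exact: continuous_affine_family.
- exists 1 => [|l /andP [l_ge0 _] l_neq0 _]; first exact: ltr01.
  apply: S_pos; rewrite lt_def l_ge0 andbT; apply: contraNneq l_neq0 => l0.
  by apply/eqP/matrixP => i j; rewrite !ord1 mxE l0.
- by rewrite mxE scale0r addr0.
Qed.

End AffineFamily.

Theorem lemma2p4 (R : realType) (n : nat) : (0 < n)%N ->
  [/\ (forall r1 r2 : {mpoly (complex R)[n + n]},
         inQ r1 -> inQ r2 -> inQ (r1 + r2) /\ inQ (r1 * r2)),
      not_closed_under_limits (@inQ R n),
      (forall r1 r2 : {mpoly (complex R)[n + n]},
         inQ' r1 -> inQ' r2 -> inQ' (r1 * r2)) &
      not_closed_under_limits (@inQ' R n)].
Proof.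
move=> n_gt0; pose i0 : 'I_n := Ordinal n_gt0.
have limit_family := not_closed_under_limits_affine
  (hermitian_sphere_sq R i0) (hermitian_abs2X R i0).
split.
- by move=> r1 r2 Q1 Q2; split; [exact: inQD | exact: inQM].
- apply: limit_family => [lam lam_gt0|]; last exact: sphere_sq_notin_Q.
  exact: (inQ_inQ'_rfam i0 lam_gt0).1.
- exact: inQ'M.
- apply: limit_family => [lam lam_gt0|]; last exact: sphere_sq_notin_Q'.
  exact: (inQ_inQ'_rfam i0 lam_gt0).2.
Qed.
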